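(* Let $i\ge 3$ and $k\ge 3$ be integers. Then: (a) $n_1(F_i,F_{i+2},F_{i+k})=\tfrac12\bigl(3F_iF_{i+2}-F_i-F_{i+2}+1\bigr)$ whenever $k\ge i+2$; (b) for $k\in\{i,i+1\}$, $n_1(F_i,F_{i+2},F_{i+k})=\tfrac12\bigl(3F_iF_{i+2}-F_i-F_{i+2}+1\bigr)-(2F_i-F_k)F_{k-2}$; (c) if $r=\lfloor (F_i-1)/F_k\rfloor\ge 1$ (equivalently $k\le i-1$), then $$n_1(F_i,F_{i+2},F_{i+k})=\tfrac12\bigl((F_i+2F_k-1)F_{i+2}-F_i+1\bigr)-\Bigl(rF_i-\frac{(r-1)(r+2)}{2}F_k\Bigr)F_{k-2}.$$
   Context: Fibonacci numbers: $F_0=0$, $F_1=1$, $F_n=F_{n-1}+F_{n-2}$. For positive integers $a_1,\dots,a_l$ with $\gcd(a_1,\dots,a_l)=1$ and an integer $n$, let $d(n;a_1,\dots,a_l)$ be the number of tuples $(x_1,\dots,x_l)$ of nonnegative integers with $a_1x_1+\dots+a_lx_l=n$. For a nonnegative integer $p$, the $p$-Sylvester number $n_p(a_1,\dots,a_l)$ is the number of nonnegative integers $n$ with $d(n;a_1,\dots,a_l)\le p$. *)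

From mathcomp Require Import all_boot all_order all_algebra.
Set Implicit Arguments. Unset Strict Implicit. Unset Printing Implicit Defensive.

Fixpoint fib (n : nat) : nat :=
  match n with
  | 0 => 0
  | 1 => 1
  | (m.+1 as p).+1 => fib p + fib m
  end.

(* d(n; a_1,...,a_l): number of tuples (x_1,...,x_l) of nonnegative integers
   with a_1 x_1 + ... + a_l x_l = n.  The recursion peels off x_1, which
   ranges over 0..n (sufficient since all a_i are positive, as in the paper). *)
Fixpoint dcount (a : seq nat) (n : nat) : nat :=
  match a with
  | [::] => (n == 0) : nat
  | a1 :: s => \sum_(x < n.+1) (if a1 * x <= n then dcount s (n - a1 * x) else 0)
  end.

(* is_sylvester p a m : the p-Sylvester number n_p(a) exists (the set
   {n >= 0 | d(n; a) <= p} is finite) and equals m. *)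
Definition is_sylvester (p : nat) (a : seq nat) (m : nat) : Prop :=
  exists N : nat, (forall n, N <= n -> p < dcount a n) /\
                  m = count (fun n => dcount a n <= p) (iota 0 N).

From mathcomp Require Import all_boot all_order all_algebra zify ring lra.
Set Implicit Arguments. Unset Strict Implicit. Unset Printing Implicit Defensive.
Import GRing.Theory Num.Theory.

(* Write [a = F_i], [g = F_(i-1)], [b = F_(i+2) = 2a + g], [K = F_k],
   [G = F_(k-2)]; the Fibonacci addition formula gives [F_(i+k) = K b - G a].
   Hence [b y + F_(i+k) z = b (y + K z) - G a z], and the representations of
   [n = g t (mod a)] correspond to the pairs [(y, z)] with [y + K z = t
   (mod a)] and [b y + F_(i+k) z <= n].  In each residue class the numbers
   with at most one representation are therefore those below the second
   smallest value [thr t] of [b y + F_(i+k) z], which is explicit, and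
   [n_1 = sum_t thr t / a].  Summing uses
   [sum_(t<a) floor(t g / a) = (a-1)(g-1)/2] and elementary floor sums whose
   shape depends on the size of [K] relative to [a]. *)

Lemma sum_ord_extend (F : nat -> nat) m N : m <= N -> (forall z, m < z -> F z = 0) ->
  \sum_(z < m.+1) F z = \sum_(z < N.+1) F z.
Proof.
move=> mN F0; rewrite -(big_mkord xpredT) -(big_mkord xpredT F).
rewrite [RHS](@big_cat_nat _ _ _ m.+1) //= [X in _ + X]big1_seq ?addn0 //.
by move=> z /andP[_]; rewrite mem_iota => /andP[hz _]; apply: F0.
Qed.

Lemma dcount_cons a1 s n : dcount (a1 :: s) n =
  \sum_(x < n.+1) (if a1 * x <= n then dcount s (n - a1 * x) else 0).
Proof. by []. Qed.

Lemma dcount1 c m N : 0 < c -> m <= N ->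
  dcount [:: c] m = \sum_(z < N.+1) (c * z == m : nat).
Proof.
move=> c0 mN /=; rewrite -(@sum_ord_extend (fun z => (c * z == m : nat)) m N) //.
  apply: eq_bigr => z _; case: ifP => h; first by congr nat_of_bool; apply/eqP/eqP; lia.
  by apply/esym/eqP; rewrite eqb0; apply/eqP; lia.
by move=> z hz; apply/eqP; rewrite eqb0; apply/eqP; nia.
Qed.

Lemma dcount2 b c m N : 0 < b -> 0 < c -> m <= N ->
  dcount [:: b; c] m = \sum_(y < N.+1) \sum_(z < N.+1) (b * y + c * z == m : nat).
Proof.
move=> b0 c0 mN; rewrite dcount_cons.
rewrite -(@sum_ord_extend (fun y => \sum_(z < N.+1) (b * y + c * z == m : nat)) m N) //.
  apply: eq_bigr => y _; case: ifP => h.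
    rewrite (dcount1 (N := N)) //; last by lia.
    by apply: eq_bigr => z _; congr nat_of_bool; apply/eqP/eqP; lia.
  by apply/esym/big1 => z _; apply/eqP; rewrite eqb0; apply/eqP; lia.
by move=> y hy; apply: big1 => z _; apply/eqP; rewrite eqb0; apply/eqP; nia.
Qed.

Definition rep_tail (a b c n y z : nat) : bool :=
  (b * y + c * z <= n) && (a %| n - (b * y + c * z)).

Lemma dcount3 a b c n : 0 < a -> 0 < b -> 0 < c ->
  dcount [:: a; b; c] n = \sum_(y < n.+1) \sum_(z < n.+1) (rep_tail a b c n y z : nat).
Proof.
move=> a0 b0 c0.
have -> : dcount [:: a; b; c] n =
    \sum_(x < n.+1) \sum_(y < n.+1) \sum_(z < n.+1) (a * x + (b * y + c * z) == n : nat).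
  rewrite dcount_cons; apply: eq_bigr => x _; case: ifP => h.
    rewrite (dcount2 (N := n)) //; last by lia.
    by apply: eq_bigr => y _; apply: eq_bigr => z _; congr nat_of_bool; apply/eqP/eqP; lia.
  by apply/esym/big1 => y _; apply/big1 => z _; apply/eqP; rewrite eqb0; apply/eqP; lia.
rewrite exchange_big; apply: eq_bigr => y _; rewrite exchange_big; apply: eq_bigr => z _.
rewrite /rep_tail; case: (boolP (_ && _)) => [/andP[le_n /dvdnP[x hx]] | no_x].
  rewrite (bigD1 (inord x : 'I_n.+1)) //= inordK; last by nia.
  rewrite big1 ?addn0; first by apply/eqP; rewrite eqb1; apply/eqP; lia.
  move=> x' hx'; apply/eqP; rewrite eqb0; apply/negP => /eqP he.
  move: hx'; rewrite -val_eqE /= inordK; last by nia.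
  have /eqP : a * x' = a * x by lia.
  by rewrite eqn_mul2l (negbTE (lt0n_neq0 a0)) => /eqP ->; rewrite eqxx.
apply: big1 => x _; apply/eqP; rewrite eqb0; apply/negP => /eqP he.
move: no_x; have -> : n - (b * y + c * z) = x * a by lia.
by rewrite dvdn_mull // andbT; move/negP; apply; lia.
Qed.

Lemma sum_pairs_card n (P : nat -> nat -> bool) :
  \sum_(y < n.+1) \sum_(z < n.+1) (P y z : nat) =
  #|[pred p : 'I_n.+1 * 'I_n.+1 | P p.1 p.2]|.
Proof.
rewrite pair_bigA /= (eq_bigr (fun p : 'I_n.+1 * 'I_n.+1 => if P p.1 p.2 then 1 else 0)).
  by rewrite -big_mkcond sum1_card.
by move=> p _; case: (P _ _).
Qed.

Lemma sum_pairs_gt1 n (P : nat -> nat -> bool) y1 z1 y2 z2 :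
  y1 <= n -> z1 <= n -> y2 <= n -> z2 <= n -> P y1 z1 -> P y2 z2 -> (y1, z1) != (y2, z2) ->
  1 < \sum_(y < n.+1) \sum_(z < n.+1) (P y z : nat).
Proof.
move=> h1 h2 h3 h4 p1 p2 ne; rewrite sum_pairs_card; apply/card_gt1P.
exists (inord y1, inord z1), (inord y2, inord z2).
rewrite !inE /= !inordK ?ltnS //; split => //.
apply: contra ne => /eqP [] /(congr1 val) /= e1 /(congr1 val) /= e2.
by move: e1 e2; rewrite !inordK ?ltnS // => -> ->.
Qed.

Lemma sum_pairs_le1 n (P : nat -> nat -> bool) y0 z0 :
  (forall y z, P y z -> y = y0 /\ z = z0) ->
  \sum_(y < n.+1) \sum_(z < n.+1) (P y z : nat) <= 1.
Proof.
move=> H; rewrite sum_pairs_card; apply/card_le1_eqP => [[y z] [y' z']]; rewrite !inE /=.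
by move=> /H [e1 e2] /H [e3 e4]; congr pair; apply: val_inj; rewrite /= ?e1 ?e2 ?e3 ?e4.
Qed.

Lemma count_iota_sum (P : pred nat) m n : count P (iota m n) = \sum_(j < n) P (m + j).
Proof.
elim: n m => [|n IH] m; first by rewrite big_ord0.
by rewrite /= big_ord_recl /= addn0 IH; congr addn; apply: eq_bigr => j _; rewrite addnS.
Qed.

Lemma count_iota_below_mod (M : nat -> nat) a Q : 0 < a ->
  (forall j, j < a -> M j %% a = j) ->
  count (fun n => n < M (n %% a)) (iota 0 (a * Q)) = \sum_(j < a) minn (M j %/ a) Q.
Proof.
move=> a0 HM; elim: Q => [|Q IH].
  by rewrite muln0 /=; apply/esym/big1 => j _; rewrite minn0.
rewrite mulnS addnC iotaD count_cat IH add0n count_iota_sum -big_split /=.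
apply: eq_bigr => j _; have hj := ltn_ord j.
have -> : (a * Q + j) %% a = j by rewrite mulnC modnMDl modn_small.
have e := divn_eq (M j) a; rewrite HM // in e.
have -> : (a * Q + j < M j) = (Q < M j %/ a).
  by rewrite {1}e ltn_add2r [X in _ < X]mulnC ltn_pmul2l.
case: ltnP => h; lia.
Qed.

Lemma is_sylvester_thresholds p s a Q (m : 'I_a -> nat) : 0 < a ->
  (forall t t', m t = m t' %[mod a] -> t = t') ->
  (forall t, m t < a * Q) ->
  (forall n t, n = m t %[mod a] -> (dcount s n <= p) = (n < m t)) ->
  is_sylvester p s (\sum_(t < a) m t %/ a).
Proof.
move=> a0 m_inj m_lt m_thr.
pose res t : 'I_a := Ordinal (ltn_pmod (m t) a0).
have res_inj : injective res.
  by move=> t t' /(congr1 val) /= /m_inj.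
have res_onto := inj_card_onto res_inj (leqnn _).
have class j : j < a -> {t | m t %% a = j}.
  move=> ja; have /codomP/sig_eqW[t /(congr1 val) /= ->] := res_onto (Ordinal ja).
  by exists t.
pose M j := if j < a =P true is ReflectT ja then m (sval (class j ja)) else 0.
have M_class t : M (m t %% a) = m t.
  rewrite /M; case: eqP => [ja | /negP]; last by rewrite ltn_pmod.
  by case: (class _ ja) => t' /= /eqP; rewrite -/(_ == _ %[mod a]) => /eqP/m_inj ->.
have M_mod j : j < a -> M j %% a = j.
  by move=> ja; rewrite /M; case: eqP => // ja'; case: (class _ ja').
have M_thr n : (dcount s n <= p) = (n < M (n %% a)).
  have [t /= ht] := class _ (ltn_pmod n a0).
  by rewrite -ht M_class (m_thr n t) // modn_mod.
exists (a * Q); split.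
  move=> n hn; rewrite ltnNge M_thr -leqNgt; apply: leq_trans hn.
  have [t /= <-] := class _ (ltn_pmod n a0); rewrite M_class; exact: ltnW.
rewrite (eq_count M_thr) (count_iota_below_mod Q a0 M_mod).
rewrite [RHS](reindex_inj res_inj) /=; apply: eq_bigr => t _.
by rewrite M_class; apply/esym/minn_idPl/ltnW; rewrite ltn_divLR // mulnC.
Qed.

Lemma double_sum_ord n : 2 * \sum_(t < n) t + n = n * n.
Proof.
rewrite -(big_mkord xpredT (fun t => t)); elim: n => [|n IH]; first by rewrite big_geq.
rewrite big_nat_recr //=; nia.
Qed.

Lemma sum_ord_leq m n : \sum_(t < n) (m <= t : nat) = n - m.
Proof.
rewrite -(big_mkord xpredT (fun t => (m <= t : nat))).
elim: n => [|n IH]; first by rewrite big_geq.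
rewrite big_nat_recr //= IH; case: leqP; lia.
Qed.

Lemma divn_mul_compl a g u : coprime a g -> 0 < u < a ->
  (u * g) %/ a + ((a - u) * g) %/ a = g - 1.
Proof.
move=> co /andP[u0 ua].
have g0 : 0 < g by move: co; rewrite lt0n; apply: contraTneq => ->; rewrite /coprime gcdn0; lia.
have e := divn_eq (u * g) a.
move: e; set q := (u * g) %/ a; set r := (u * g) %% a => e.
have ra : r < a by rewrite /r ltn_mod; lia.
have r0 : 0 < r.
  rewrite lt0n; apply/negP => /eqP r0.
  have : a %| u * g by rewrite /dvdn -/r r0.
  by rewrite Gauss_dvdl // => /(dvdn_leq u0); lia.
have qg : q < g.
  have : q * a < g * a by nia.
  by rewrite ltn_mul2r => /andP[].
have -> : (a - u) * g = (g - q - 1) * a + (a - r).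
  move: qg e ra; generalize q r => q' r' qg e ra'.
  have [w hw] : exists w, g = q' + 1 + w by exists (g - q' - 1); lia.
  have [v hv] : exists v, a = u + v by exists (a - u); lia.
  subst g a; rewrite addKn (_ : q' + 1 + w - q' - 1 = w); nia.
rewrite divnMDl ?divn_small; lia.
Qed.

Lemma double_sum_divn_mul a g : coprime a g -> 0 < a -> 0 < g ->
  2 * (\sum_(t < a) (t * g) %/ a) + a + g = a * g + 1.
Proof.
move=> co a0 g0.
rewrite -(big_mkord xpredT (fun t => (t * g) %/ a)) big_ltn // mul0n div0n add0n.
set T := \sum_(1 <= t < a) _.
have eT : 2 * T = (a - 1) * (g - 1).
  rewrite mul2n -addnn {2}/T big_nat_rev /T -big_split /=.
  rewrite -sum_nat_const_nat; apply: eq_big_nat => t /andP [h1 h2].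
  by rewrite (_ : 1 + a - t.+1 = a - t) ?divn_mul_compl //; lia.
nia.
Qed.

Lemma sum_divn_shift K a : 0 < K -> \sum_(0 <= t < K) (t + a) %/ K = a.
Proof.
move=> K0; elim: a => [|a IH].
  by rewrite big_nat_cond big1 // => t /andP [/andP [_ h] _]; rewrite addn0 divn_small.
have E : \sum_(0 <= t < K.+1) (t + a) %/ K = a %/ K + \sum_(0 <= t < K) (t.+1 + a) %/ K.
  by rewrite big_nat_recl.
have E2 : \sum_(0 <= t < K.+1) (t + a) %/ K = a + (K + a) %/ K.
  by rewrite big_nat_recr //= IH.
have FK : (K + a) %/ K = a %/ K + 1 by rewrite divnDl ?dvdnn // divnn K0 addnC.
under eq_bigr do rewrite addnS -addSn.
lia.
Qed.

Lemma double_sum_divn K r j : 0 < K -> j <= K ->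
  2 * (\sum_(0 <= t < r * K + j) t %/ K) + K * r = K * r * r + 2 * r * j.
Proof.
move=> K0; elim: r j => [|r IH] j hj.
  rewrite mul0n add0n big_nat_cond big1 ?muln0 //.
  by move=> t /andP [/andP [_ h] _]; rewrite divn_small //; lia.
rewrite (@big_cat_nat _ _ _ (r * K + K)) //=; last by rewrite mulSn; lia.
have -> : \sum_(r * K + K <= t < r.+1 * K + j) t %/ K = \sum_(r * K + K <= t < r.+1 * K + j) r.+1.
  apply: eq_big_nat => t /andP [ht1 ht2].
  have -> : t = r.+1 * K + (t - r.+1 * K) by rewrite mulSn in ht1 *; lia.
  by rewrite divnMDl // divn_small ?addn0 //; rewrite mulSn in ht1 ht2 *; lia.
rewrite sum_nat_const_nat; have := IH K (leqnn K).
move: (\sum_(0 <= t < r * K + K) t %/ K) => S; rewrite mulSn; lia.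
Qed.

Lemma eq_modMl_coprime a g x y : coprime a g -> g * x = g * y %[mod a] -> x = y %[mod a].
Proof.
move=> co.
wlog xy : x y / x <= y.
  move=> H; case: (leqP x y) => h; first exact: H.
  by move=> e; apply/esym/H; [exact: ltnW | rewrite e].
move/eqP; rewrite eq_sym eqn_mod_dvd; last exact: leq_mul.
rewrite -mulnBr Gauss_dvdr // => hd.
by apply/esym/eqP; rewrite eqn_mod_dvd.
Qed.

Section Thresholds.

Variables a g b K G : nat.
Hypotheses (a_gt0 : 0 < a) (G_gt0 : 0 < G) (GK : 2 * G <= K) (def_b : b = 2 * a + g).

Definition thr_q t : nat := if K <= t then t %/ K else (t + a) %/ K.
Definition thr_top t : nat := if K <= t then G else b.

(* For [c = K b - G a] and [t < a], [thr t] is the second smallest value of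
   [b y + c z] over the pairs with [y + K z = t] mod [a]; it is attained at
   [(t - K (q - 1), q - 1)] when [K <= t] and at [(t + a - K q, q)]
   otherwise, where [q = thr_q t]. *)
Definition thr t : nat := (2 * t + thr_top t - G * thr_q t) * a + t * g.

Lemma thr_mod t : thr t = t * g %[mod a].
Proof. by rewrite /thr modnMDl. Qed.

Lemma thr_q_le t : G * thr_q t <= 2 * t + thr_top t.
Proof.
rewrite /thr_q /thr_top; case: (leqP K t) => Kt.
- set q := t %/ K; have : q * K <= t by apply: leq_divM.
  have : q * (2 * G) <= q * K by rewrite leq_mul2l GK orbT.
  lia.
- set q := (t + a) %/ K; have : q * K <= t + a by apply: leq_divM.
  have : q * (2 * G) <= q * K by rewrite leq_mul2l GK orbT.
  lia.
Qed.

Lemma thr_ge t : K <= t ->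
  [/\ thr t + (t %/ K) * G * a = t * b + G * a, 0 < t %/ K & (t %/ K) * K <= t].
Proof.
move=> Kt; have := thr_q_le t; rewrite /thr /thr_q /thr_top Kt => qle.
have q1 : 0 < t %/ K by rewrite divn_gt0 //; lia.
have qK : t %/ K * K <= t by apply: leq_divM.
by split=> //; nia.
Qed.

Lemma thr_lt t : t < K ->
  thr t + ((t + a) %/ K) * G * a = (t + a) * b /\ ((t + a) %/ K) * K <= t + a.
Proof.
move=> Kt; have := thr_q_le t; rewrite /thr /thr_q /thr_top (ltn_geF Kt) => qle.
have qK : (t + a) %/ K * K <= t + a by apply: leq_divM.
by split=> //; nia.
Qed.

Lemma thr_bound t : t < a -> thr t < a * (2 * b + 1).
Proof.
move=> ta; case: (leqP K t) => Kt.
  have [hm q1 qK] := thr_ge Kt.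
  have : 1 * (G * a) <= t %/ K * (G * a) by rewrite leq_mul2r q1 orbT.
  have : t * b <= a * b by rewrite leq_mul2r; apply/orP; right; lia.
  lia.
have [hm qK] := thr_lt Kt.
have : (t + a) * b <= (2 * a) * b by rewrite leq_mul2r; apply/orP; right; lia.
move: hm; move: ((t + a) %/ K) (thr t) => q m hm; lia.
Qed.

Definition thr_sum := \sum_(t < a) thr t %/ a.

Hypothesis co_ag : coprime a g.

Section Representations.

Variable c : nat.
Hypothesis def_c : c + G * a = K * b.

Lemma value_shift y z : b * y + c * z + G * a * z = b * (y + K * z).
Proof. have : c * z + G * a * z = K * b * z by rewrite -mulnDl def_c. nia. Qed.

Lemma value_mod y z : (b * y + c * z) %% a = (g * (y + K * z)) %% a.
Proof.
rewrite -(modnMDl (G * z)).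
have -> : G * z * a + (b * y + c * z) = (2 * (y + K * z)) * a + g * (y + K * z).
  by have := value_shift y z; nia.
by rewrite modnMDl.
Qed.

Lemma below_thr_ge t y z : t < a -> K <= t -> (y + K * z) %% a = t ->
  b * y + c * z < thr t -> y = t - K * (t %/ K) /\ z = t %/ K.
Proof.
move=> ta Kt hu hV.
have e := divn_eq (y + K * z) a; rewrite hu in e.
have eV := value_shift y z; rewrite e in eV.
have [hm q1 qK] := thr_ge Kt.
move: hm q1 qK e eV; set q := t %/ K; set s := (y + K * z) %/ a => hm q1 qK e eV.
case: s e eV => [|s] e eV.
  have zq : z <= q by rewrite leq_divRL //; lia.
  case: (ltnP z q) => zq'; last first.
    have ezq : z = q by lia.
    by split; lia.
  have : z.+1 * (G * a) <= q * (G * a) by rewrite leq_mul2r zq' orbT.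
  lia.
have hs : G * z <= a * s.+1.
  have : 2 * (G * z) <= K * z by rewrite mulnA leq_mul2r GK orbT.
  have : a <= s.+1 * a by rewrite leq_pmull.
  lia.
have : a * (G * z) <= a * (b * s.+1).
  rewrite leq_mul2l; apply/orP; right; apply: (leq_trans hs).
  by rewrite leq_mul2r; apply/orP; right; lia.
have : 1 * (G * a) <= q * (G * a) by rewrite leq_mul2r q1 orbT.
lia.
Qed.

Lemma below_thr_lt t y z : t < a -> t < K -> (y + K * z) %% a = t ->
  b * y + c * z < thr t -> y = t /\ z = 0.
Proof.
move=> ta Kt hu hV.
have e := divn_eq (y + K * z) a; rewrite hu in e.
have eV := value_shift y z; rewrite e in eV.
have h2 : 2 * (G * z) <= K * z by rewrite mulnA leq_mul2r GK orbT.
have [hm qK] := thr_lt Kt.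
move: hm qK e eV; set q := (t + a) %/ K; set s := (y + K * z) %/ a => hm qK e eV.
case: s e eV => [|[|s]] e eV.
- case: z e h2 hu {eV hV} => [|z] e h2 hu; first by split; lia.
  have : K <= K * z.+1 by rewrite leq_pmulr.
  lia.
- have zq : z <= q by rewrite leq_divRL //; lia.
  have : z * (G * a) <= q * (G * a) by rewrite leq_mul2r zq orbT.
  lia.
- have hs : G * z <= b * s.+1 by lia.
  have : a * (G * z) <= a * (b * s.+1) by rewrite leq_mul2l hs orbT.
  lia.
Qed.

Lemma below_thr_unique t y z : t < a -> (y + K * z) %% a = t -> b * y + c * z < thr t ->
  y = t - K * (t %/ K) /\ z = t %/ K.
Proof.
move=> ta hu hV; case: (leqP K t) => Kt; first exact: below_thr_ge.
by rewrite divn_small // muln0 subn0; apply: below_thr_lt.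
Qed.

Lemma thr_two_points t : t < a ->
  exists y0 z0 y1 z1, [/\ (y0, z0) != (y1, z1), (y0 + K * z0) %% a = t,
    (y1 + K * z1) %% a = t, b * y0 + c * z0 <= thr t & b * y1 + c * z1 = thr t].
Proof.
move=> ta; case: (leqP K t) => Kt.
  have [hm q1 qK] := thr_ge Kt.
  move: hm q1 qK; case: (t %/ K) => [//|q] hm _ qK.
  exists (t - K * q.+1), q.+1, (t - K * q), q; split.
  - by apply/negP => /eqP [_]; lia.
  - by rewrite subnK ?modn_small //; lia.
  - by rewrite subnK ?modn_small //; lia.
  - by have := value_shift (t - K * q.+1) q.+1; rewrite subnK; lia.
  - by have := value_shift (t - K * q) q; rewrite subnK; lia.
have [hm qK] := thr_lt Kt.
move: hm qK; set q := (t + a) %/ K => hm qK.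
exists t, 0, (t + a - K * q), q; split.
- by apply/negP => /eqP [e1 e2]; move: e1; rewrite -e2 muln0 subn0; lia.
- by rewrite muln0 addn0 modn_small.
- by rewrite subnK ?modnDr ?modn_small //; lia.
- have qGK : 2 * (q * G) <= q * K by rewrite mulnCA leq_mul2l GK orbT.
  have : a * (q * G) <= a * b by rewrite leq_mul2l; apply/orP; right; lia.
  have := value_shift t 0.
  lia.
- by have := value_shift (t + a - K * q) q; rewrite subnK; lia.
Qed.

Lemma rep_tail_class n t y z : t < a -> n = t * g %[mod a] ->
  rep_tail a b c n y z = (b * y + c * z <= n) && ((y + K * z) %% a == t).
Proof.
move=> ta hn; rewrite /rep_tail; case: leqP => //= hv.
rewrite -eqn_mod_dvd // value_mod hn; apply/eqP/eqP => h.
  by rewrite -(modn_small ta); apply: (eq_modMl_coprime co_ag); rewrite -h mulnC.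
by rewrite -[in RHS]modnMmr h mulnC.
Qed.

Hypothesis c_gt0 : 0 < c.

Lemma dcount_le1_thr n t : t < a -> n = t * g %[mod a] ->
  (dcount [:: a; b; c] n <= 1) = (n < thr t).
Proof.
move=> ta hn; rewrite dcount3 //; last by lia.
apply/idP/idP.
  apply: contraLR; rewrite -leqNgt -ltnNge => hmn.
  have [y0 [z0 [y1 [z1 [ne e0 e1 v0 v1]]]]] := thr_two_points ta.
  have le_value y z : y <= b * y + c * z /\ z <= b * y + c * z.
    split; first by apply: leq_trans (leq_addr _ _); rewrite leq_pmull //; lia.
    by apply: leq_trans (leq_addl _ _); rewrite leq_pmull.
  have := le_value y0 z0; have := le_value y1 z1; move=> [? ?] [? ?].
  apply: (@sum_pairs_gt1 n (rep_tail a b c n) y0 z0 y1 z1) => //; try lia;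
    rewrite (rep_tail_class _ _ ta hn) ?e0 ?e1 eqxx andbT; lia.
move=> hnm; apply: (@sum_pairs_le1 n _ (t - K * (t %/ K)) (t %/ K)) => y z.
rewrite (rep_tail_class _ _ ta hn) => /andP [hv /eqP ht].
apply: (below_thr_unique ta ht); lia.
Qed.

Lemma is_sylvester_thr : is_sylvester 1 [:: a; b; c] thr_sum.
Proof.
apply: (@is_sylvester_thresholds _ _ _ (2 * b + 1) (fun t : 'I_a => thr t)) => //.
- move=> t t'; rewrite !thr_mod ![_ * g]mulnC => /(eq_modMl_coprime co_ag).
  by rewrite !modn_small // => /val_inj.
- by move=> t; apply: thr_bound.
- by move=> n t; rewrite thr_mod; apply: dcount_le1_thr.
Qed.

End Representations.

Hypothesis g_gt0 : 0 < g.

Lemma double_thr_sum :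
  2 * thr_sum + 2 * G * (\sum_(t < a) thr_q t) + 3 * a + g =
  2 * a * a + 2 * (\sum_(t < a) thr_top t) + a * g + 1.
Proof.
have split_thr : thr_sum = \sum_(t < a) (2 * t + thr_top t - G * thr_q t) + \sum_(t < a) (t * g) %/ a.
  by rewrite -big_split; apply: eq_bigr => t _; rewrite /thr divnMDl.
have split_q : \sum_(t < a) (2 * t + thr_top t - G * thr_q t) + G * \sum_(t < a) thr_q t =
    2 * \sum_(t < a) t + \sum_(t < a) thr_top t.
  rewrite !big_distrr -!big_split; apply: eq_bigr => t _ /=.
  by have := thr_q_le t; lia.
have := double_sum_divn_mul co_ag a_gt0 g_gt0; have := double_sum_ord a.
lia.
Qed.

Lemma sum_thr_ge_a : a <= K ->
  \sum_(t < a) thr_q t = 2 * a - K /\ \sum_(t < a) thr_top t = a * b.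
Proof.
move=> aK; split.
  rewrite (eq_bigr (fun t : 'I_a => (K - a <= t : nat))) ?sum_ord_leq; first lia.
  move=> t _; have ta := ltn_ord t; rewrite /thr_q ltn_geF; last lia.
  case: leqP => h; last by rewrite divn_small //; lia.
  have -> : t + a = 1 * K + (t + a - K) by lia.
  by rewrite divnMDl ?divn_small //; lia.
rewrite (eq_bigr (fun _ => b)) => [|t _]; first by rewrite big_const_ord iter_addn_0 mulnC.
by rewrite /thr_top ltn_geF //; apply: leq_trans aK.
Qed.

Lemma sum_thr_lt_a : K < a ->
  \sum_(t < a) thr_q t = a + \sum_(0 <= t < a) t %/ K /\
  \sum_(t < a) thr_top t = K * b + (a - K) * G.
Proof.
move=> Ka; have K0 : 0 < K by lia.
rewrite -(big_mkord xpredT thr_q) -(big_mkord xpredT thr_top).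
rewrite !(big_cat_nat (leq0n K) (ltnW Ka)) /=.
have lowK : \sum_(0 <= t < K) t %/ K = 0.
  by rewrite big_nat_cond big1 // => t /andP [/andP [_ h] _]; rewrite divn_small.
split.
  rewrite lowK add0n; congr addn.
    rewrite -[RHS](sum_divn_shift a K0); apply: eq_big_nat => t /andP [_ h].
    by rewrite /thr_q ltn_geF.
  by apply: eq_big_nat => t /andP [h _]; rewrite /thr_q h.
rewrite (eq_big_nat _ _ (F2 := fun _ => b)); last first.
  by move=> t /andP [_ h]; rewrite /thr_top ltn_geF.
rewrite [X in _ + X = _](eq_big_nat _ _ (F2 := fun _ => G)); last first.
  by move=> t /andP [h _]; rewrite /thr_top h.
by rewrite !sum_nat_const_nat subn0.
Qed.

Local Open Scope ring_scope.

Let natr_eq (m n : nat) : m = n -> m%:R = n%:R :> rat. Proof. by move=> ->. Qed.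

Lemma thr_sum_ge_2a : (2 * a <= K)%N ->
  thr_sum%:R = (3%:R * a%:R * b%:R - a%:R - b%:R + 1) / 2%:R :> rat.
Proof.
move=> aK; have aK' : (a <= K)%N by lia.
have [sq st] := sum_thr_ge_a aK'.
have := double_thr_sum; rewrite sq st (_ : 2 * a - K = 0)%N; last lia.
move/natr_eq; rewrite def_b !(natrD, natrM) => e; lra.
Qed.

Lemma thr_sum_between : (a <= K <= 2 * a)%N ->
  thr_sum%:R = (3%:R * a%:R * b%:R - a%:R - b%:R + 1) / 2%:R
               - (2%:R * a%:R - K%:R) * G%:R :> rat.
Proof.
move=> /andP[aK Ka2]; have [sq st] := sum_thr_ge_a aK.
have := double_thr_sum; rewrite sq st.
move/natr_eq; rewrite def_b !(natrD, natrM) natrB // natrM => e; lra.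
Qed.

Lemma thr_sum_lt_a : let r := (a.-1 %/ K)%N in (1 <= r)%N ->
  thr_sum%:R = ((a%:R + 2%:R * K%:R - 1) * b%:R - a%:R + 1) / 2%:R
               - (r%:R * a%:R - ((r%:R - 1) * (r%:R + 2%:R)) / 2%:R * K%:R) * G%:R :> rat.
Proof.
move=> r r1; have K0 : (0 < K)%N by lia.
have Ka : (K < a)%N by move: r1; rewrite /r leq_divRL // mul1n; lia.
have [sq st] := sum_thr_lt_a Ka.
set j := (a.-1 %% K).+1.
have jK : (j <= K)%N by rewrite /j ltn_mod.
have ea : a = (r * K + j)%N by rewrite /j /r addnS -divn_eq; lia.
have := double_sum_divn r K0 jK; rewrite -ea.
have := double_thr_sum; rewrite sq st.
move: (\sum_(0 <= t < a) t %/ K)%N => Q e1 e2.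
have e3 : (G * (2 * Q + K * r) + 2 * G * r * (r * K) = G * (K * r * r) + 2 * G * r * a)%N.
  by rewrite e2 [in RHS]ea; nia.
have Kab : (K * G <= a * G)%N by rewrite leq_mul2r ltnW ?orbT.
have e4 : (2 * thr_sum + 2 * G * (a + Q) + 3 * a + g + 2 * K * G =
           2 * a * a + 2 * (K * b + a * G) + a * g + 1)%N by lia.
rewrite def_b in e4 *; move: e3 e4 => /natr_eq e3 /natr_eq e4.
rewrite !(natrD, natrM) in e3 e4 *.
lra.
Qed.

End Thresholds.

Lemma fibSS n : fib n.+2 = fib n.+1 + fib n. Proof. by []. Qed.

Lemma fibS_pred n : 0 < n -> fib n.+1 = fib n + fib n.-1.
Proof. by case: n. Qed.

Lemma fib_leq m n : m <= n -> fib m <= fib n.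
Proof.
move=> /subnK <-; elim: (n - m) => // d IH; rewrite addSn.
by apply: leq_trans IH _; case: (d + m) => // p; rewrite fibSS leq_addr.
Qed.

Lemma fib_gt0 n : 0 < n -> 0 < fib n.
Proof. by move=> n0; apply: leq_trans (fib_leq n0). Qed.

Lemma double_fib_sub2 k : 2 * fib (k - 2) <= fib k.
Proof.
case: k => [|[|k]] //; rewrite !subSS subn0 fibSS; have := fib_leq (leqnSn k); lia.
Qed.

Lemma coprime_fibS n : coprime (fib n.+1) (fib n).
Proof. by elim: n => // n IH; rewrite /coprime fibSS gcdnC gcdnDl. Qed.

Lemma fib_addS m n : fib (m + n).+1 = fib m.+1 * fib n.+1 + fib m * fib n.
Proof.
elim/ltn_ind: m => -[|[|m]] IH; first by rewrite mul1n addn0.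
  by rewrite !mul1n.
rewrite addSn fibSS [in fib (m.+1 + n)]addSn !IH // !fibSS; nia.
Qed.

Lemma fib_add_sub2 i k : 2 <= k -> fib (i + k) + fib (k - 2) * fib i = fib k * fib (i + 2).
Proof.
case: k => [|[|k]] // _; rewrite !subSS subn0 addnS fib_addS addn2 !fibSS; nia.
Qed.

Local Open Scope ring_scope.

Theorem theorem10 (i k : nat) (hi : (3 <= i)%N) (hk : (3 <= k)%N) :
  let F := fun j => (fib j)%:R : rat in
  let base := (3%:R * F i * F (i + 2)%N - F i - F (i + 2)%N + 1) / 2%:R in
  [/\ ((i + 2 <= k)%N ->
        exists m : nat, is_sylvester 1 [:: fib i; fib (i + 2); fib (i + k)] m
                        /\ m%:R = base),
      ((k == i) || (k == i.+1) ->
        exists m : nat, is_sylvester 1 [:: fib i; fib (i + 2); fib (i + k)] m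
                        /\ m%:R = base - (2%:R * F i - F k) * F (k - 2)%N) &
      (let r := ((fib i).-1 %/ fib k)%N in (1 <= r)%N ->
        exists m : nat, is_sylvester 1 [:: fib i; fib (i + 2); fib (i + k)] m
                        /\ m%:R = ((F i + 2%:R * F k - 1) * F (i + 2)%N - F i + 1) / 2%:R
                                  - (r%:R * F i - ((r%:R - 1) * (r%:R + 2%:R)) / 2%:R * F k)
                                    * F (k - 2)%N)].
Proof.
move=> F base; have i_gt0 : (0 < i)%N by lia.
have a_gt0 : (0 < fib i)%N by apply: fib_gt0; lia.
have g_gt0 : (0 < fib i.-1)%N by apply: fib_gt0; lia.
have G_gt0 : (0 < fib (k - 2))%N by apply: fib_gt0; lia.
have GK := double_fib_sub2 k.
have def_b : fib (i + 2) = (2 * fib i + fib i.-1)%N.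
  by rewrite addn2 fibSS fibS_pred //; lia.
have co_ag : coprime (fib i) (fib i.-1) by rewrite -[in fib i](prednK i_gt0) coprime_fibS.
have def_c := fib_add_sub2 i (ltnW hk).
have c_gt0 : (0 < fib (i + k))%N by apply: fib_gt0; lia.
have sylv := is_sylvester_thr a_gt0 G_gt0 GK def_b co_ag def_c c_gt0.
split=> [ik | kik | r r1]; eexists; split; try exact: sylv.
- apply: thr_sum_ge_2a => //; have := fib_leq ik; lia.
- apply: thr_sum_between => //; case/orP: kik => /eqP ->; first lia.
  by rewrite fibS_pred //; have := fib_leq (leq_pred i); lia.
- exact: thr_sum_lt_a.
Qed.
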